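(* Let $f \in \Bbbk[t]\setminus\Bbbk$ and let $L$ be a Lie subalgebra of $L(f)$ of finite codimension in $L(f)$. Then there exists $g \in \Bbbk[t]\setminus\{0\}$ with $f'g\in\Bbbk[f]$ such that $L(f,g) \subseteq L$.
   Context: $\Bbbk$ is a field of characteristic zero. $\mathbb{W}_1 = \Bbbk[t]\partial$, $\partial = d/dt$, with bracket $[f\partial, g\partial] = (fg'-f'g)\partial$. For $f,g \in \Bbbk[t]\setminus\{0\}$ with $f'g \in \Bbbk[f]$, $L(f,g) = \Bbbk[f]\,g\partial \subseteq \mathbb{W}_1$. $g_f$ is the unique monic polynomial of minimal degree with $f'g_f \in \Bbbk[f]$, and $L(f) = L(f,g_f)$. *)

From mathcomp Require Import all_boot all_order all_algebra.
Set Implicit Arguments. Unset Strict Implicit. Unset Printing Implicit Defensive.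
Import GRing.Theory.
Local Open Scope ring_scope.

(* Elements of W_1 = k[t] d/dt are represented by their coefficient polynomial
   f in {poly K} (standing for f * d/dt). *)

(* Lie bracket [f d, g d] = (f g' - f' g) d *)
Definition wbracket (K : fieldType) (p q : {poly K}) : {poly K} :=
  p * q^`() - p^`() * q.

Definition in_kf (K : fieldType) (f h : {poly K}) : Prop :=
  exists P : {poly K}, h = P \Po f.

Definition Lfg (K : fieldType) (f g : {poly K}) (h : {poly K}) : Prop :=
  exists P : {poly K}, h = (P \Po f) * g.

Definition is_gf (K : fieldType) (f g : {poly K}) : Prop :=
  [/\ g \is monic, in_kf f (f^`() * g) &
      forall h : {poly K}, h != 0 -> in_kf f (f^`() * h) -> (size g <= size h)%N].

Definition is_lie_subalgebra (K : fieldType) (L : {poly K} -> Prop) : Prop :=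
  [/\ L 0,
      forall p q, L p -> L q -> L (p + q),
      forall (a : K) p, L p -> L (a *: p) &
      forall p q, L p -> L q -> L (wbracket p q)].

Definition finite_codim (K : fieldType) (L M : {poly K} -> Prop) : Prop :=
  exists (n : nat) (v : 'I_n -> {poly K}), (forall i, M (v i)) /\
    forall h, M h -> exists (l : {poly K}) (c : 'I_n -> K),
      L l /\ h = l + \sum_(i < n) c i *: v i.

From Stdlib Require Import IndefiniteDescription.
From mathcomp Require Import all_boot all_order all_algebra.
From mathcomp Require Import ring.
Set Implicit Arguments.
Unset Strict Implicit.
Unset Printing Implicit Defensive.

Import GRing.Theory.
Local Open Scope ring_scope.

(* Let v_1, ..., v_n span L(f) modulo L.  For a in L, the condition
   "[a, v_i] in L for all i" together with "a in L" amounts to n + n^2 linear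
   conditions modulo L, so some nonzero combination a = Lam(f) g_f of the
   n^2 + n + 1 elements f^k g_f satisfies them; then [a, L(f)] is contained in L.
   Since a (a R(f))' - a' a R(f) = a^2 f' R'(f) and every polynomial is a
   derivative in characteristic zero, L(f, a^2 f') = [a, a k[f]] lies in L. *)

Section Pchar0Derivative.
Variable K : fieldType.
Hypothesis K_pchar0 : [pchar K] =i pred0.

Lemma deriv_neq0 (p : {poly K}) : (1 < size p)%N -> p^`() != 0.
Proof.
move=> p_gt1; apply/eqP => /(congr1 (fun q : {poly K} => q`_(size p).-2)).
rewrite coef_deriv coef0.
have -> : (size p).-2.+1 = (size p).-1 by case: (size p) p_gt1 => [|[|m]].
rewrite -lead_coefE -mulr_natr => /eqP.
rewrite mulf_eq0 lead_coef_eq0 -size_poly_eq0 ((pcharf0P _).1 K_pchar0).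
by case: (size p) p_gt1 => [|[|m]].
Qed.

Lemma deriv_surj (q : {poly K}) : exists p : {poly K}, p^`() = q.
Proof.
exists (\poly_(i < (size q).+1) if i is j.+1 then q`_j / j.+1%:R else 0).
apply/polyP => i; rewrite coef_deriv coef_poly ltnS.
case: ltnP => [_ | q_le]; last by rewrite mul0rn nth_default.
by rewrite /= -[X in X = _]mulr_natr mulfVK // ((pcharf0P _).1 K_pchar0).
Qed.

End Pchar0Derivative.

Section Bracket.
Variable K : fieldType.
Implicit Types p q r : {poly K}.

Lemma wbracketDr p q r : wbracket p (q + r) = wbracket p q + wbracket p r.
Proof. by rewrite /wbracket derivD; ring. Qed.

Lemma wbracket_sumlZ (I : finType) (c : I -> K) (F : I -> {poly K}) q :
  wbracket (\sum_i c i *: F i) q = \sum_i c i *: wbracket (F i) q.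
Proof.
rewrite /wbracket raddf_sum /= !mulr_suml -sumrB; apply: eq_bigr => i _.
by rewrite derivZ -!scalerAl scalerBr.
Qed.

Lemma wbracket_sumrZ (I : finType) (c : I -> K) (F : I -> {poly K}) p :
  wbracket p (\sum_i c i *: F i) = \sum_i c i *: wbracket p (F i).
Proof.
rewrite /wbracket raddf_sum /= !mulr_sumr -sumrB; apply: eq_bigr => i _.
by rewrite derivZ -!scalerAr scalerBr.
Qed.

Lemma wbracket_mulr p q : wbracket p (p * q) = p ^+ 2 * q^`().
Proof. by rewrite /wbracket derivM; ring. Qed.

Lemma Lfg_wbracket f g p q :
  in_kf f (f^`() * g) -> Lfg f g p -> Lfg f g q -> Lfg f g (wbracket p q).
Proof.
move=> [P fg_eq] [A ->] [B ->]; exists ((A * B^`() - A^`() * B) * P).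
rewrite /wbracket !derivM !deriv_comp !comp_polyM comp_polyB !comp_polyM -fg_eq.
ring.
Qed.

End Bracket.

Section LinearCombinations.
Variable K : fieldType.

Lemma lie_subalgebra_sumZ (L : {poly K} -> Prop) (I : finType)
    (c : I -> K) (F : I -> {poly K}) :
  is_lie_subalgebra L -> (forall i, L (F i)) -> L (\sum_i c i *: F i).
Proof. by case=> L0 LD LZ _ LF; apply: (big_ind L) => // i _; apply: LZ. Qed.

Lemma sumZ_annihilated (V : lmodType K) (I J : finType) (lam : I -> K)
    (x : I -> V) (d : I -> J -> K) (v : J -> V) :
  (forall j, \sum_i lam i * d i j = 0) ->
  \sum_i lam i *: (x i + \sum_j d i j *: v j) = \sum_i lam i *: x i.
Proof.
move=> lam_d; under eq_bigr do rewrite scalerDr scaler_sumr.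
rewrite big_split /= [X in _ + X](_ : _ = 0) ?addr0 //.
rewrite exchange_big big1 // => j _.
by under eq_bigr do rewrite scalerA; rewrite -scaler_suml lam_d scale0r.
Qed.

Lemma exists_annihilating_combination (I J : finType) (c : I -> J -> K) :
  (#|J| < #|I|)%N ->
  exists2 lam : I -> K, exists i, lam i != 0 &
    forall j, \sum_i lam i * c i j = 0.
Proof.
move=> card_lt.
pose C : 'M[K]_(#|I|, #|J|) := \matrix_(k, l) c (enum_val k) (enum_val l).
have /rowV0Pn [u /sub_kermxP uC u_neq0] : kermx C != 0.
  rewrite -mxrank_eq0 mxrank_ker subn_eq0 -ltnNge.
  exact: leq_ltn_trans (rank_leq_col C) card_lt.
exists (fun i => u 0 (enum_rank i)).
  have [k u_k] : exists k, u 0 k != 0.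
    apply/existsP; apply: contraNT u_neq0 => /existsPn u0.
    by apply/eqP/rowP => k; rewrite mxE; apply/eqP/negPn/u0.
  by exists (enum_val k); rewrite enum_valK.
move=> j; transitivity ((u *m C) 0 (enum_rank j)); last by rewrite uC mxE.
rewrite mxE (reindex _ (onW_bij _ (enum_rank_bij I))) /=.
by apply: eq_bigr => i _; rewrite mxE !enum_rankK.
Qed.

End LinearCombinations.

Section FiniteCodimension.
Variable K : fieldType.
Variables L M : {poly K} -> Prop.
Hypothesis L_lie : is_lie_subalgebra L.
Hypothesis L_sub : forall h, L h -> M h.
Hypothesis M_wbracket : forall p q, M p -> M q -> M (wbracket p q).
Variables (n : nat) (v : 'I_n -> {poly K}).
Hypothesis M_v : forall i, M (v i).
Hypothesis v_span : forall h, M h ->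
  exists (l : {poly K}) (c : 'I_n -> K), L l /\ h = l + \sum_i c i *: v i.

Lemma decompose_family (I : Type) (x : I -> {poly K}) :
  (forall k, M (x k)) ->
  exists (l : I -> {poly K}) (d : I -> 'I_n -> K),
    (forall k, L (l k)) /\ forall k, x k = l k + \sum_i d k i *: v i.
Proof.
move=> M_x; have [|ld ld_spec] := functional_choice
  (fun k (ld : {poly K} * ('I_n -> K)) => L ld.1 /\ x k = ld.1 + \sum_i ld.2 i *: v i).
  by move=> k; case/v_span: (M_x k) => l [c lc]; exists (l, c).
by exists (fun k => (ld k).1), (fun k => (ld k).2); split => k; case: (ld_spec k).
Qed.

Lemma wbracket_normalizes a :
  L a -> (forall i, L (wbracket a (v i))) -> forall h, M h -> L (wbracket a h).
Proof.
case: (L_lie) => _ LD _ LB La Lav h /v_span [l [c [Ll ->]]].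
by rewrite wbracketDr wbracket_sumrZ; apply: LD; [exact: LB | exact: lie_subalgebra_sumZ].
Qed.

Lemma exists_normalizing_combination (I : finType) (w : I -> {poly K}) :
  (n.+1 * n < #|I|)%N -> (forall k, M (w k)) ->
  exists2 lam : I -> K, exists k, lam k != 0 &
    L (\sum_k lam k *: w k) /\
    forall h, M h -> L (wbracket (\sum_k lam k *: w k) h).
Proof.
move=> card_gt M_w.
have [l [d [L_l w_dec]]] := decompose_family M_w.
have M_lv (ki : I * 'I_n) : M (wbracket (l ki.1) (v ki.2)).
  by apply: M_wbracket; [apply: L_sub | apply: M_v].
have [l' [e [L_l' lv_dec]]] := decompose_family M_lv.
pose coord k (oj : option 'I_n * 'I_n) :=
  if oj.1 is Some i then e (k, i) oj.2 else d k oj.2.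
have [|lam lam_neq0 lam_coord] := exists_annihilating_combination coord.
  by rewrite card_prod card_option card_ord.
have a_l : \sum_k lam k *: w k = \sum_k lam k *: l k.
  under eq_bigr do rewrite w_dec.
  by apply: sumZ_annihilated => i; apply: (lam_coord (None, i)).
have La : L (\sum_k lam k *: w k) by rewrite a_l; exact: lie_subalgebra_sumZ.
exists lam => //; split=> //; apply: wbracket_normalizes => // i.
rewrite a_l wbracket_sumlZ.
under eq_bigr do rewrite (lv_dec (_, i)).
rewrite sumZ_annihilated; first exact: lie_subalgebra_sumZ.
by move=> j; apply: (lam_coord (Some i, j)).
Qed.

End FiniteCodimension.

Theorem mainTheorem3 (K : fieldType) (hchar : [pchar K] =i pred0)
  (f : {poly K}) (hf : (1 < size f)%N)
  (gf : {poly K}) (hgf : is_gf f gf)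
  (L : {poly K} -> Prop)
  (hL : is_lie_subalgebra L) (hLsub : forall h, L h -> Lfg f gf h)
  (hcod : finite_codim L (Lfg f gf)) :
  exists g : {poly K}, [/\ g != 0, in_kf f (f^`() * g) &
    forall h, Lfg f g h -> L h].
Proof.
case: hgf => /monic_neq0 gf_neq0 fgf_kf _; case: (fgf_kf) => [P0 fgf_eq].
have [n [v [M_v v_span]]] := hcod.
pose N := (n.+1 * n).+1.
pose w (k : 'I_N) := ('X^k \Po f) * gf.
have [|k|lam [k0 lam_k0] [La a_norm]] := exists_normalizing_combination hL hLsub
  (fun _ _ => Lfg_wbracket fgf_kf) M_v v_span (w := w).
- by rewrite card_ord.
- by exists 'X^k.
set a := \sum_k _ in La a_norm.
pose Lam := \poly_(k < N) lam (inord k).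
have a_def : a = (Lam \Po f) * gf.
  rewrite /Lam poly_def linear_sum mulr_suml; apply: eq_bigr => k _.
  by rewrite inord_val linearZ /= -scalerAl.
have a_neq0 : a != 0.
  rewrite a_def mulf_neq0 // comp_poly_eq0 //.
  apply: contra lam_k0 => /eqP/(congr1 (coefp k0)).
  by rewrite /= /Lam coef_poly ltn_ord inord_val coef0 => ->.
exists (a ^+ 2 * f^`()); split.
- by rewrite mulf_neq0 ?expf_neq0 ?deriv_neq0.
- by exists ((Lam * P0) ^+ 2); rewrite expr2 !comp_polyM -fgf_eq a_def; ring.
- move=> _ [P ->]; have [R <-] := deriv_surj hchar P.
  have -> : (R^`() \Po f) * (a ^+ 2 * f^`()) = wbracket a (a * (R \Po f)).
    by rewrite wbracket_mulr deriv_comp; ring.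
  by apply: a_norm; exists (Lam * R); rewrite a_def comp_polyM; ring.
Qed.
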